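(* For any choice of eigenbases $B_g$ ($g\in G$) used to define $\Upsilon$, the composite $\Phi^*\Upsilon:C^p\to C^p$ is the identity map for every $p\ge0$.
   Context: Let $G$ be a finite group acting linearly on a complex vector space $V$ of dimension $n$, $v\mapsto{}^gv$, and on $V^*$, $S(V)$, $\bigwedge V^*$ accordingly. $S(V)\#G$ is $S(V)\otimes\mathbb C G$ with product $(a\otimes g)(b\otimes h)=a\,{}^gb\otimes gh$. Let $C^p=S(V)\otimes\bigwedge^pV^*\otimes\mathbb C[G]$, identified with $\operatorname{Hom}_{\mathbb C}(\bigwedge^pV,S(V)\#G)$ (for $f\otimes\omega\otimes g$, $u\mapsto \omega(u)f\otimes g$). $\Phi^*:\operatorname{Hom}_{\mathbb C}(S(V)^{\otimes p},S(V)\#G)\to C^p$ is given by $(\Phi^*F)(u_1\wedge\cdots\wedge u_p)=\sum_{\pi\in\mathrm{Sym}_p}\operatorname{sgn}(\pi)F(u_{\pi(1)}\otimes\cdots\otimes u_{\pi(p)})$ for $u_i\in V$. The map $\Upsilon:C^p\to\operatorname{Hom}_{\mathbb C}(S(V)^{\otimes p},S(V)\#G)$ is defined as follows. For each $g\in G$ fix a basis $B_g=\{v_1,\dots,v_n\}$ of $V$ of eigenvectors of $g$, ${}^gv_i=\epsilon_iv_i$, with dual basis $v_1^*,\dots,v_n^*$; let $s_i\in GL(V)$ be the diagonal map (in this basis) $v_i\mapsto\epsilon_iv_i$, $v_j\mapsto v_j$ ($j\ne i$), so $g=s_1\cdots s_n$. Let $\partial_i:S(V)\to S(V)$ be the ordinary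 partial derivative $\partial/\partial v_i$ if $\epsilon_i=1$ and $\partial_i(f)=(f-{}^{s_i}f)/(v_i-{}^{s_i}v_i)$ if $\epsilon_i\ne1$. For $\alpha=f_g\otimes v_{j_1}^*\wedge\cdots\wedge v_{j_p}^*\otimes g$ with $j_1<\cdots<j_p$, set $\Upsilon(\alpha)(f_1\otimes\cdots\otimes f_p)=\Big(\prod_{k=1}^p{}^{s_1s_2\cdots s_{j_k-1}}(\partial_{j_k}f_k)\Big)f_g\otimes g$, and extend linearly. *)

From HB Require Import structures.
From mathcomp Require Import all_boot all_order all_fingroup all_algebra.
From mathcomp Require Import mxrepresentation.
From Stdlib Require Import ClassicalEpsilon.
Set Implicit Arguments.
Unset Strict Implicit.
Unset Printing Implicit Defensive.
Import GRing.Theory.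
Local Open Scope ring_scope.

Section Defs.
Variable F : numClosedFieldType.

(* S(V) for V = F^n (column vectors): polynomial ring F[x_1,...,x_n],
   built as iterated univariate polynomials; x_i = i-th standard basis vector. *)
Fixpoint MP (n : nat) : idomainType :=
  if n is n'.+1 then ({poly MP n'} : idomainType) else (F : idomainType).

Fixpoint cst (n : nat) : F -> MP n :=
  match n return F -> MP n with
  | 0 => fun a => a
  | n'.+1 => fun a => (cst n' a)%:P
  end.

Fixpoint var (n : nat) : 'I_n -> MP n :=
  match n return 'I_n -> MP n with
  | 0 => fun _ => 0
  | n'.+1 => fun i =>
      match unlift ord_max i with None => 'X | Some j => (var j)%:P end
  end.

Fixpoint ev (n m : nat) : ('I_n -> MP m) -> MP n -> MP m :=
  match n return ('I_n -> MP m) -> MP n -> MP m with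
  | 0 => fun _ a => cst m a
  | n'.+1 => fun s p =>
      (map_poly (@ev n' m (fun j => s (lift ord_max j))) p).[s ord_max]
  end.

Fixpoint pdx (n : nat) : 'I_n -> MP n -> MP n :=
  match n return 'I_n -> MP n -> MP n with
  | 0 => fun _ f => f
  | n'.+1 => fun i p =>
      match unlift ord_max i with
      | None => p^`()
      | Some j => map_poly (@pdx n' j) p
      end
  end.

Variable n : nat.

Definition embV (v : 'cV[F]_n) : MP n := \sum_(k < n) cst n (v k 0) * var k.

(* the algebra automorphism of S(V) induced by M in GL(V) (v |-> M *m v) *)
Definition act (M : 'M[F]_n) (f : MP n) : MP n :=
  @ev n n (fun k => embV (col k M)) f.

(* basis B (columns v_1..v_n) with eigenvalues e : s_i := diagonal map
   v_i |-> e_i v_i, v_j |-> v_j (j <> i) *)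
Definition smat (B : 'M[F]_n) (e : 'I_n -> F) (i : 'I_n) : 'M[F]_n :=
  B *m diag_mx (\row_l (if l == i then e i else 1)) *m invmx B.

(* ordinary partial derivative d/dv_i in the coordinates of the basis B *)
Definition pderivB (B : 'M[F]_n) (i : 'I_n) (f : MP n) : MP n :=
  act B (pdx i (act (invmx B) f)).

(* (f - ^S f) / (v - ^S v), the quotient in the domain S(V) *)
Definition ddiff (S : 'M[F]_n) (v : 'cV[F]_n) (f : MP n) : MP n :=
  epsilon (inhabits 0)
    (fun h => (embV v - act S (embV v)) * h = f - act S f).

Definition partialB (B : 'M[F]_n) (e : 'I_n -> F) (i : 'I_n) (f : MP n) : MP n :=
  if e i == 1 then pderivB B i f else ddiff (smat B e i) (col i B) f.

(* ^{s_1 s_2 ... s_{j-1}} f  (0-based: s_0 ... s_{j-1} with index < j) *)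
Definition spre (B : 'M[F]_n) (e : 'I_n -> F) (j : 'I_n) (f : MP n) : MP n :=
  foldr (fun l h => act (smat B e l) h) f (filter (fun l : 'I_n => (l < j)%N) (enum 'I_n)).

Variable gT : finGroupType.

Definition incr (p : nat) (J : {ffun 'I_p -> 'I_n}) : bool :=
  [forall k : 'I_p, forall l : 'I_p, (k < l)%N ==> (J k < J l)%N].

(* An element of C^p = Hom(wedge^p V, S(V)#G) is represented by the
   alternating multilinear map (u_1,...,u_p) |-> (g |-> component at g). *)
Definition multilinear (p : nat) (a : ('I_p -> 'cV[F]_n) -> gT -> MP n) :=
  forall (k : 'I_p) (u : 'I_p -> 'cV[F]_n) (x y : 'cV[F]_n) (c : F) (g : gT),
    a (fun l => if l == k then c *: x + y else u l) g =
    cst n c * a (fun l => if l == k then x else u l) g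
    + a (fun l => if l == k then y else u l) g.

Definition alternating (p : nat) (a : ('I_p -> 'cV[F]_n) -> gT -> MP n) :=
  forall (u : 'I_p -> 'cV[F]_n) (i j : 'I_p), i != j -> u i = u j ->
    forall g : gT, a u g = 0.

(* Upsilon : C^p -> Hom(S(V)^{(x)p}, S(V)#G); an element of the target is
   represented by its values on pure tensors f_1 (x) ... (x) f_p, with values
   in S(V)#G = S(V) (x) CG given as g |-> S(V)-component at g.
   alpha = sum_{g,J} f_{g,J} (x) v_J^* (x) g with
   f_{g,J} = alpha(v_{j_1} /\ ... /\ v_{j_p}) component at g. *)
Definition Upsilon (B : gT -> 'M[F]_n) (e : gT -> 'I_n -> F) (p : nat)
  (alpha : ('I_p -> 'cV[F]_n) -> gT -> MP n) : ('I_p -> MP n) -> gT -> MP n :=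
  fun f g =>
    \sum_(J : {ffun 'I_p -> 'I_n} | incr J)
      (\prod_(k < p) spre (B g) (e g) (J k) (partialB (B g) (e g) (J k) (f k)))
      * alpha (fun k => col (J k) (B g)) g.

Definition PhiStar (p : nat) (Fm : ('I_p -> MP n) -> gT -> MP n)
  : ('I_p -> 'cV[F]_n) -> gT -> MP n :=
  fun u g => \sum_(s : 'S_p) (-1) ^+ s * Fm (fun k => embV (u (s k))) g.

End Defs.

From Pilot Require Import Defs.
From HB Require Import structures.
From mathcomp Require Import all_boot all_order all_fingroup all_algebra.
From mathcomp Require Import mxrepresentation.
From Stdlib Require Import ClassicalEpsilon FunctionalExtensionality.
Set Implicit Arguments.
Unset Strict Implicit.
Unset Printing Implicit Defensive.
Import GRing.Theory.
Local Open Scope ring_scope.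

(* Fix g and let v_1, ..., v_n be the basis B_g, so that alpha(-)(g) is an
   alternating F-multilinear map.  On a linear form u in V, each operator
   partial_j (ordinary derivative or divided difference
   (f - ^{s_j} f) / (v_j - ^{s_j} v_j)) returns the constant c_j(u), the j-th
   coordinate of u in the basis B_g, and the twists ^{s_1...s_{j-1}} fix
   constants.  Hence Phi^* Upsilon(alpha)(u_1, ..., u_p) at g equals
     sum_{J increasing} sum_{s in S_p} sgn(s) prod_k c_{J k}(u_{s k})
                                       alpha(v_{J 1}, ..., v_{J p}),
   which is the multilinear expansion of alpha(u_1, ..., u_p) regrouped:
   index maps J : [p] -> [n] are sorted by their increasing rearrangement,
   non-injective ones contribute nothing, and each orbit under S_p yields
   the signed sum. *)

(* Coefficientwise maps of polynomials by a function fixing 0; these let the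
   recursive operators of the model of S(V) be handled one variable at a time. *)
Section MapPolyId0.
Variables (R S : nzSemiRingType) (f : R -> S).
Hypothesis f0 : f 0 = 0.

Lemma map_poly_nmod : {morph f : x y / x + y} -> nmod_morphism (map_poly f).
Proof.
move=> fD; split=> [|p q]; first exact: map_poly0.
by apply/polyP => i; rewrite coefD !coef_map_id0 // coefD fD.
Qed.

Lemma map_polyC_id0 c : map_poly f c%:P = (f c)%:P.
Proof. by apply/polyP => i; rewrite coef_map_id0 // !coefC; case: (i == 0)%N. Qed.

Lemma map_polyCX_id0 c : map_poly f (c%:P * 'X) = (f c)%:P * 'X.
Proof.
apply/polyP => i; rewrite coef_map_id0 // !coefCM !coefX.
by case: (i == 1)%N; rewrite ?mulr1 ?mulr0.
Qed.
End MapPolyId0.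

Section PolynomialModel.
Variable F : numClosedFieldType.

Lemma cst_nmod n : nmod_morphism (@cst F n).
Proof.
elim: n => [|n [IH0 IHD]] //=; split=> [|a b]; first by rewrite IH0.
by rewrite IHD polyCD.
Qed.

Lemma cst_monoid n : monoid_morphism (@cst F n).
Proof.
elim: n => [|n [IH1 IHM]] //=; split=> [|a b]; first by rewrite IH1.
by rewrite IHM polyCM.
Qed.

HB.instance Definition _ n :=
  GRing.isNmodMorphism.Build F (MP F n) (@cst F n) (cst_nmod n).
HB.instance Definition _ n :=
  GRing.isMonoidMorphism.Build F (MP F n) (@cst F n) (cst_monoid n).

Lemma cst_inj n : injective (@cst F n).
Proof. elim: n => [|n IH] //= a b /polyC_inj; exact: IH. Qed.

Lemma ev_nmod n m (s : 'I_n -> MP F m) : nmod_morphism (ev s).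
Proof.
elim: n s => [|n IH] s /=; first exact: cst_nmod.
have [map0 mapD] := map_poly_nmod (fst (IH _)) (snd (IH (fun j => s (lift ord_max j)))).
by split=> [|p q]; rewrite ?map0 ?horner0 // mapD hornerD.
Qed.

HB.instance Definition _ n m s :=
  GRing.isNmodMorphism.Build (MP F n) (MP F m) (@ev F n m s) (ev_nmod s).

Lemma ev_cst n m (s : 'I_n -> MP F m) a : ev s (cst n a) = cst m a.
Proof.
elim: n s => [|n IH] s //=.
by rewrite map_polyC_id0 ?hornerC ?IH // raddf0.
Qed.

Lemma ev_cstvar n m (s : 'I_n -> MP F m) a k : ev s (cst n a * var F k) = cst m a * s k.
Proof.
elim: n s k => [|n IH] s; first by case.
move=> k /=; case: (unliftP ord_max k) => [j ->|->] /=.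
  by rewrite -polyCM map_polyC_id0 ?hornerC ?IH ?raddf0.
by rewrite map_polyCX_id0 ?raddf0 // hornerMX hornerC ev_cst.
Qed.

Lemma pdx_nmod n (i : 'I_n) : nmod_morphism (@pdx F n i).
Proof.
elim: n i => [|n IH] i; first by case: i.
rewrite /=; case: (unlift ord_max i) => [j|]; last first.
  by split=> [|p q]; [exact: deriv0 | exact: derivD].
exact: map_poly_nmod (fst (IH j)) (snd (IH j)).
Qed.

HB.instance Definition _ n i :=
  GRing.isNmodMorphism.Build (MP F n) (MP F n) (@pdx F n i) (pdx_nmod i).

Lemma pdx_cst n (i : 'I_n) a : @pdx F n i (cst n a) = 0.
Proof.
elim: n i => [|n IH] i; first by case: i.
rewrite /=; case: (unlift ord_max i) => [j|]; last exact: derivC.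
by rewrite map_polyC_id0 ?IH ?raddf0.
Qed.

Lemma pdx_cstvar n (i k : 'I_n) a :
  @pdx F n i (cst n a * var F k) = cst n (if k == i then a else 0).
Proof.
elim: n i k => [|n IH] i k; first by case: i.
rewrite /=; case: (unliftP ord_max k) => [j ->|->]; rewrite /= ?liftK ?unlift_none.
  rewrite -polyCM; case: (unliftP ord_max i) => [j' ->|->]; rewrite /= ?liftK ?unlift_none.
    by rewrite map_polyC_id0 ?raddf0 // IH (inj_eq lift_inj).
  by rewrite derivC eq_sym (negbTE (neq_lift _ _)) raddf0.
case: (unliftP ord_max i) => [j' ->|->]; rewrite /= ?liftK ?unlift_none.
  by rewrite map_polyCX_id0 ?raddf0 // pdx_cst mul0r (negbTE (neq_lift _ _)) raddf0.
by rewrite eqxx mul_polyC derivZ derivX -mul_polyC mulr1.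
Qed.
End PolynomialModel.

Lemma mulmx_colsum (R : comPzSemiRingType) m n (M : 'M[R]_(m, n)) (v : 'cV[R]_n) :
  M *m v = \sum_k v k 0 *: col k M.
Proof.
apply/matrixP => i j; rewrite [j]ord1 !mxE summxE; apply: eq_bigr => k _.
by rewrite !mxE mulrC.
Qed.

(* The linear forms V -> S(V), and how the operators entering Upsilon act
   on them: all of partial_j, and hence Upsilon, see a linear form only
   through its coordinates in the chosen basis. *)
Section LinearForms.
Variables (F : numClosedFieldType) (n : nat).
Local Notation cst := (@cst F n).
Implicit Types (B S : 'M[F]_n) (v w : 'cV[F]_n).

Lemma embV_nmod : nmod_morphism (@embV F n).
Proof.
split=> [|v w]; first by rewrite /embV big1 // => k _; rewrite mxE raddf0 mul0r.
by rewrite /embV -big_split; apply: eq_bigr => k _; rewrite mxE raddfD mulrDl.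
Qed.

HB.instance Definition _ :=
  GRing.isNmodMorphism.Build 'cV[F]_n (MP F n) (@embV F n) embV_nmod.

Lemma embVZ c (v : 'cV[F]_n) : embV (c *: v) = cst c * embV v.
Proof. by rewrite /embV mulr_sumr; apply: eq_bigr => k _; rewrite mxE rmorphM mulrA. Qed.

Lemma act_cst M a : Defs.act M (cst a) = cst a.
Proof. exact: ev_cst. Qed.

Lemma act_embV M (v : 'cV[F]_n) : Defs.act M (embV v) = embV (M *m v).
Proof.
rewrite {1}/embV /Defs.act raddf_sum /= mulmx_colsum raddf_sum /=; apply: eq_bigr => k _.
by rewrite ev_cstvar embVZ.
Qed.

Lemma pdx_embV i w : @pdx F n i (embV w) = cst (w i 0).
Proof.
rewrite /embV raddf_sum /= (eq_bigr (fun k => cst (if k == i then w k 0 else 0))).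
  by rewrite -rmorph_sum -big_mkcond big_pred1_eq.
by move=> k _; rewrite pdx_cstvar.
Qed.

Lemma embV_inj : injective (@embV F n).
Proof.
move=> v w vw; apply/matrixP => i j; rewrite [j]ord1; apply: (@cst_inj F n).
by rewrite -!pdx_embV vw.
Qed.

Definition coordB B w (i : 'I_n) : F := (invmx B *m w) i 0.

Lemma coordB_col B i j : B \in unitmx -> coordB B (col j B) i = (i == j)%:R.
Proof. by move=> uB; rewrite /coordB colE mulKmx // mxE eqxx andbT. Qed.

Lemma pderivB_embV B i w : pderivB B i (embV w) = cst (coordB B w i).
Proof. by rewrite /pderivB act_embV pdx_embV act_cst. Qed.

Lemma smat_sub B e i w : B \in unitmx ->
  w - smat B e i *m w = (coordB B w i * (1 - e i)) *: col i B.
Proof.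
move=> uB; rewrite /smat -!mulmxA -{1}(mulKVmx uB w) -mulmxBr /coordB.
move: (invmx B *m w) => x.
have -> : x - diag_mx (\row_l (if l == i then e i else 1)) *m x
          = (x i 0 * (1 - e i)) *: delta_mx i 0.
  apply/matrixP => r c; rewrite [c]ord1 mul_diag_mx !mxE eqxx andbT.
  case: (eqVneq r i) => [->|_]; first by rewrite mulr1 mulrBr mulr1 mulrC.
  by rewrite mul1r subrr mulr0.
by rewrite -scalemxAr -colE.
Qed.

Lemma ddiffE S v f h : embV v - Defs.act S (embV v) != 0 ->
  (embV v - Defs.act S (embV v)) * h = f - Defs.act S f -> ddiff S v f = h.
Proof.
move=> nz dh; apply: (mulfI nz); rewrite dh.
pose P h := (embV v - Defs.act S (embV v)) * h = f - Defs.act S f.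
exact: (epsilon_spec (inhabits 0) P (ex_intro _ h dh)).
Qed.

(* Both kinds of partial_i send a linear form w to its constant coordinate
   c_i(w): for e_i != 1 the divided difference is c_i(w) (1 - e_i) v_i
   divided by (1 - e_i) v_i. *)
Lemma partialB_embV B e i w : B \in unitmx ->
  partialB B e i (embV w) = cst (coordB B w i).
Proof.
move=> uB; rewrite /partialB; case: eqP => [_|/eqP ne1]; first exact: pderivB_embV.
have sub u : embV u - Defs.act (smat B e i) (embV u)
             = cst (coordB B u i * (1 - e i)) * embV (col i B).
  by rewrite act_embV -(raddfB (@embV F n)) /= smat_sub // embVZ.
apply: ddiffE; last by rewrite !sub coordB_col // eqxx mul1r mulrC rmorphM mulrA.
rewrite sub coordB_col // eqxx mul1r mulf_neq0 //.
  by rewrite fmorph_eq0 subr_eq0 eq_sym.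
have : coordB B (col i B) i != 0 by rewrite coordB_col // eqxx oner_neq0.
apply: contraNneq; rewrite -(raddf0 (@embV F n)) => /embV_inj ->.
by rewrite /coordB mulmx0 mxE.
Qed.

Lemma spre_cst B e j a : spre B e j (cst a) = cst a.
Proof. by rewrite /spre; elim: (filter _ _) => [|l s IH] //=; rewrite IH act_cst. Qed.

Lemma Upsilon_embV (gT : finGroupType) (B : gT -> 'M[F]_n) (e : gT -> 'I_n -> F) p
    (alpha : ('I_p -> 'cV[F]_n) -> gT -> MP F n) (w : 'I_p -> 'cV[F]_n) g :
  B g \in unitmx ->
  Upsilon B e alpha (fun k => embV (w k)) g =
  \sum_(J : {ffun 'I_p -> 'I_n} | incr J)
    (\prod_k cst (coordB (B g) (w k) (J k))) * alpha (fun k => col (J k) (B g)) g.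
Proof.
move=> uB; apply: eq_bigr => J _; congr (_ * _); apply: eq_bigr => k _.
by rewrite partialB_embV // spre_cst.
Qed.
End LinearForms.

(* Index maps J : 'I_p -> 'I_n.  An injective map is uniquely an increasing
   map precomposed with a permutation; the increasing map is obtained by
   sorting the values. *)
Section IncreasingRearrangement.
Variables n p : nat.
Local Notation idx := {ffun 'I_p -> 'I_n}.

Definition ord_le : rel 'I_n := relpre val leq.

Lemma ord_le_total : total ord_le. Proof. by move=> x y; apply: leq_total. Qed.
Lemma ord_le_trans : transitive ord_le. Proof. by move=> x y z; apply: leq_trans. Qed.
Lemma ord_le_anti : antisymmetric ord_le.
Proof. by move=> x y /anti_leq/val_inj. Qed.

Definition sorted_values (J : idx) : seq 'I_n := sort ord_le (codom J).

Definition rearrange (J : idx) : idx := [ffun k => nth (J k) (sorted_values J) k].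

Definition precomp (J : idx) (s : 'S_p) : idx := [ffun k => J (s k)].

Lemma size_sorted_values J : size (sorted_values J) = p.
Proof. by rewrite size_sort size_codom card_ord. Qed.

Lemma incr_inj (J : idx) : incr J -> injective J.
Proof.
move=> /forallP incrJ k l Jkl; case: (ltngtP k l) => [kl|lk|/val_inj //].
  by have := implyP (forallP (incrJ k) l) kl; rewrite Jkl ltnn.
by have := implyP (forallP (incrJ l) k) lk; rewrite Jkl ltnn.
Qed.

Lemma incr_sorted (J : idx) : incr J -> sorted ord_le (codom J).
Proof.
move=> /forallP incrJ; rewrite codomE sorted_map.
have : sorted (relpre val ltn) (enum 'I_p).
  by rewrite -sorted_map val_enum_ord iota_ltn_sorted.
apply: sub_sorted => k l kl; apply: ltnW; exact: (implyP (forallP (incrJ k) l) kl).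
Qed.

Lemma rearrange_incr (J : idx) : injectiveb J -> incr (rearrange J).
Proof.
move=> /injectiveP injJ.
have uniq_vals : uniq (sorted_values J).
  by rewrite sort_uniq codomE map_inj_uniq // enum_uniq.
have lt_sorted : sorted (relpre val ltn) (sorted_values J).
  rewrite -sorted_map ltn_sorted_uniq_leq (map_inj_uniq val_inj) uniq_vals.
  by rewrite sorted_map; exact: (sort_sorted ord_le_total).
apply/forallP => k; apply/forallP => l; apply/implyP => kl.
rewrite !ffunE (set_nth_default (J k) (J l)) ?size_sorted_values //.
have lt_trans : transitive (relpre (@nat_of_ord n) ltn) by move=> ? ? ?; apply: ltn_trans.
by apply: (sorted_ltn_nth lt_trans) => //; rewrite inE size_sorted_values.
Qed.

Lemma rearrange_precomp (J : idx) s : incr J -> rearrange (precomp J s) = J.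
Proof.
move=> incrJ.
have perm_vals : perm_eq (codom (precomp J s)) (codom J).
  have -> : codom (precomp J s) = map J (map s (enum 'I_p)).
    by rewrite codomE -(map_comp J s); apply: eq_map => k /=; rewrite ffunE.
  rewrite codomE; apply: perm_map; apply: uniq_perm.
  - by rewrite map_inj_uniq ?enum_uniq //; exact: perm_inj.
  - exact: enum_uniq.
  - move=> k; rewrite mem_enum inE; apply/mapP; exists ((s^-1)%g k); last by rewrite permKV.
    by rewrite mem_enum.
have vals : sorted_values (precomp J s) = codom J.
  rewrite /sorted_values (perm_sortP ord_le_total ord_le_trans ord_le_anti _ _ perm_vals).
  exact: (sorted_sort ord_le_trans (incr_sorted incrJ)).
apply/ffunP => k; rewrite ffunE vals codomE (nth_map k) ?size_enum_ord //.
by congr (J _); apply: val_inj; rewrite /= nth_enum_ord.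
Qed.

Lemma rearrange_factor (J : idx) : injectiveb J -> exists s, precomp (rearrange J) s = J.
Proof.
move=> /injectiveP injJ.
have lt_index k : (index (J k) (sorted_values J) < p)%N.
  by rewrite -[X in (_ < X)%N](size_sorted_values J) index_mem mem_sort codom_f.
pose f k : 'I_p := Ordinal (lt_index k).
have rearrange_f k : rearrange J (f k) = J k.
  rewrite ffunE (set_nth_default (J k)) ?size_sorted_values //.
  by rewrite nth_index // mem_sort codom_f.
have inj_f : injective f by move=> k l fkl; apply: injJ; rewrite -!rearrange_f fkl.
by exists (perm inj_f); apply/ffunP => k; rewrite ffunE permE.
Qed.

Lemma precomp_injective (J : idx) s : incr J -> injectiveb (precomp J s).
Proof.
move=> incrJ; apply/injectiveP => k l; rewrite !ffunE => /(incr_inj incrJ).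
exact: perm_inj.
Qed.

Lemma sum_orbit (R : nmodType) (T : idx -> R) (J : idx) : incr J ->
  \sum_(s : 'S_p) T (precomp J s)
  = \sum_(J' : idx | injectiveb J' && (rearrange J' == J)) T J'.
Proof.
move=> incrJ.
have precomp_inj : injective (precomp J).
  move=> s1 s2 /ffunP eq_s; apply/permP => k.
  by have := eq_s k; rewrite !ffunE => /(incr_inj incrJ).
pose unperm J' := odflt 1%g [pick s | precomp J s == J'].
symmetry; rewrite (reindex_onto (precomp J) unperm).
  apply: eq_bigl => s; rewrite precomp_injective // rearrange_precomp // eqxx /=.
  by rewrite /unperm; case: pickP => [s' /eqP /precomp_inj -> | /(_ s) /negbT];
    rewrite /= eqxx.
move=> J' /andP [injJ' /eqP rearrJ']; rewrite /unperm; case: pickP => [s' /eqP //|none].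
have [s eqJ'] := rearrange_factor injJ'; rewrite rearrJ' in eqJ'.
by have := none s; rewrite eqJ' eqxx.
Qed.
End IncreasingRearrangement.

Definition upd (I : eqType) (T : Type) (u : I -> T) (k : I) (x : T) : I -> T :=
  fun l => if l == k then x else u l.

Lemma upd_id (I : eqType) T (u : I -> T) k : upd u k (u k) = u.
Proof. by apply: functional_extensionality => l; rewrite /upd; case: eqP => // ->. Qed.

Lemma upd_comm (I : eqType) T (u : I -> T) i j x y :
  i != j -> upd (upd u j y) i x = upd (upd u i x) j y.
Proof.
move=> ij; apply: functional_extensionality => l; rewrite /upd.
by case: (eqVneq l i) => // ->; rewrite (negbTE ij).
Qed.

Definition fupd (I : finType) (T : Type) (J : {ffun I -> T}) (k : I) (t : T) : {ffun I -> T} :=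
  [ffun l => upd J k t l].

Lemma fupdE (I : finType) T (J : {ffun I -> T}) k t l :
  fupd J k t l = if l == k then t else J l.
Proof. by rewrite ffunE. Qed.

Lemma big_ffun_slot (I T : finType) (R : nmodType) (k : I) (t0 : T)
    (P : pred {ffun I -> T}) (f : {ffun I -> T} -> R) :
  (forall J t, P (fupd J k t) = P J) ->
  \sum_(J | P J) f J = \sum_(J | P J && (J k == t0)) \sum_t f (fupd J k t).
Proof.
move=> P_fupd; rewrite pair_big_dep /=.
rewrite (reindex_onto (fun x => fupd x.1 k x.2) (fun J => (fupd J k t0, J k))) /=.
  apply: eq_bigl => -[J t] /=; rewrite P_fupd fupdE eqxx xpair_eqE eqxx !andbT.
  congr (_ && _); apply/eqP/eqP => [/ffunP/(_ k)|<-]; first by rewrite !fupdE eqxx.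
  by apply/ffunP => l; rewrite !fupdE; case: eqP => // ->.
by move=> J _; apply/ffunP => l; rewrite !fupdE; case: eqP => // ->.
Qed.

Section AlternatingForms.
Variables (K : pzRingType) (V : lmodType K) (R : comPzRingType).
Variables (phi : {rmorphism K -> R}) (p : nat) (a : ('I_p -> V) -> R).
Hypothesis a_linear : forall k u (x y : V) (c : K),
  a (upd u k (c *: x + y)) = phi c * a (upd u k x) + a (upd u k y).
Hypothesis a_alt : forall u (i j : 'I_p), i != j -> u i = u j -> a u = 0.

Lemma form_upd0 u k : a (upd u k 0) = 0.
Proof.
have := a_linear k u 0 0 1; rewrite scaler0 addr0 rmorph1 mul1r => double.
by apply: (@addrI _ (a (upd u k 0))); rewrite addr0 -double.
Qed.

Lemma form_upd_sum u k (I : finType) (P : pred I) (c : I -> K) (x : I -> V) :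
  a (upd u k (\sum_(j | P j) c j *: x j)) = \sum_(j | P j) phi (c j) * a (upd u k (x j)).
Proof.
apply: (big_rec2 (fun y1 y2 => a (upd u k y1) = y2)); first exact: form_upd0.
by move=> j y1 y2 _ <-; apply: a_linear.
Qed.

Lemma form_tperm u (i j : 'I_p) : i != j -> a (fun k => u (tperm i j k)) = - a u.
Proof.
move=> ij; pose b x y := a (upd (upd u j y) i x).
have bDl x1 x2 y : b (x1 + x2) y = b x1 y + b x2 y.
  by have := a_linear i (upd u j y) x1 x2 1; rewrite scale1r rmorph1 mul1r.
have bDr x y1 y2 : b x (y1 + y2) = b x y1 + b x y2.
  rewrite /b !(upd_comm _ _ _ ij).
  by have := a_linear j (upd u i x) y1 y2 1; rewrite scale1r rmorph1 mul1r.
have bxx x : b x x = 0 by apply: (a_alt ij); rewrite /upd eqxx eq_sym (negbTE ij) eqxx.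
have := bxx (u i + u j); rewrite bDl !bDr !bxx add0r addr0 => /eqP.
rewrite addr_eq0 => /eqP b_anti.
have -> : a u = b (u i) (u j) by rewrite /b !upd_id.
have -> : (fun k => u (tperm i j k)) = upd (upd u j (u i)) i (u j).
  apply: functional_extensionality => l; rewrite /upd.
  case: (tpermP i j l) => [->|->|/eqP li /eqP lj]; rewrite ?eqxx //.
    by rewrite eq_sym (negbTE ij).
  by rewrite (negbTE li) (negbTE lj).
by rewrite b_anti opprK.
Qed.

Lemma form_perm u (s : 'S_p) : a (fun k => u (s k)) = (-1) ^+ s * a u.
Proof.
have [ts -> dts] := prod_tpermP s; elim: ts dts u => [|t ts IH] /= dts u.
  rewrite big_nil odd_perm1 expr0 mul1r; congr a.
  by apply: functional_extensionality => k; rewrite perm1.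
move/andP: dts => [dt dts]; set s' := (\prod_(t0 <- ts) tperm t0.1 t0.2)%g.
rewrite big_cons odd_permM odd_tperm dt.
have -> : (fun k => u ((tperm t.1 t.2 * s')%g k))
          = (fun k => (fun l => u (s' l)) (tperm t.1 t.2 k)).
  by apply: functional_extensionality => k; rewrite permM.
rewrite (form_tperm (fun l => u (s' l))) // IH //.
by case: (odd_perm _); rewrite /= ?expr0 ?expr1 ?mulN1r ?mul1r ?opprK.
Qed.

Section Expansion.
Variables (n : nat) (v : 'I_n -> V) (c : 'I_n -> 'I_p -> K) (u : 'I_p -> V).
Hypothesis u_coords : forall k, u k = \sum_j c j k *: v j.
Local Notation idx := {ffun 'I_p -> 'I_n}.

(* After expanding the first m arguments along the index map J, the
   coefficient and the arguments of the corresponding term. *)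
Definition prefix_weight m (J : idx) : R := \prod_(k : 'I_p | (k < m)%N) phi (c (J k) k).

Definition prefix_args m (J : idx) : 'I_p -> V :=
  fun k => if (k < m)%N then v (J k) else u k.

Lemma prefix_weight_slot (k : 'I_p) J j :
  prefix_weight k.+1 (fupd J k j) = phi (c j k) * prefix_weight k J.
Proof.
rewrite /prefix_weight (bigD1 k) //= fupdE eqxx; congr (_ * _).
apply: eq_big => [l|l /andP [_ lk]]; last by rewrite fupdE (negbTE lk).
by rewrite ltnS ltn_neqAle val_eqE andbC.
Qed.

Lemma prefix_args_slot (k : 'I_p) J j :
  prefix_args k.+1 (fupd J k j) = upd (prefix_args k J) k (v j).
Proof.
apply: functional_extensionality => l; rewrite /prefix_args /upd fupdE ltnS leq_eqVlt val_eqE.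
by case: (eqVneq l k) => [->|].
Qed.

(* The unexpanded positions carry the dummy index J1. *)
Section PrefixExpansion.
Variable J1 : idx.

Definition agrees_from m (J : idx) := [forall k : 'I_p, (m <= k)%N ==> (J k == J1 k)].

Lemma agrees_from_slot (k : 'I_p) J :
  agrees_from k J = agrees_from k.+1 J && (J k == J1 k).
Proof.
apply/forallP/andP => [agJ | [/forallP agJ Jk]].
  split; last exact: implyP (agJ k) (leqnn k).
  by apply/forallP => l; apply/implyP => kl; exact: implyP (agJ l) (ltnW kl).
move=> l; apply/implyP; rewrite leq_eqVlt => /orP [/eqP/val_inj <- //|kl].
exact: implyP (agJ l) kl.
Qed.

Lemma agrees_from_fupd (k : 'I_p) J j : agrees_from k.+1 (fupd J k j) = agrees_from k.+1 J.
Proof.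
apply: eq_forallb => l; rewrite fupdE.
by case: (eqVneq l k) => [->|]; rewrite ?ltnn.
Qed.

Lemma expand_slot (k : 'I_p) :
  \sum_(J | agrees_from k J) prefix_weight k J * a (prefix_args k J)
  = \sum_(J | agrees_from k.+1 J) prefix_weight k.+1 J * a (prefix_args k.+1 J).
Proof.
rewrite [RHS](@big_ffun_slot _ _ _ k (J1 k)); last exact: agrees_from_fupd.
apply: eq_big => [J|J _]; first exact: agrees_from_slot.
have slot_k : prefix_args k J k = u k by rewrite /prefix_args ltnn.
have -> : prefix_args k J = upd (prefix_args k J) k (\sum_j c j k *: v j).
  by rewrite -u_coords -slot_k upd_id.
rewrite form_upd_sum mulr_sumr; apply: eq_bigr => j _.
by rewrite prefix_weight_slot prefix_args_slot mulrCA mulrA.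
Qed.

Lemma expand_prefix m : (m <= p)%N ->
  a u = \sum_(J | agrees_from m J) prefix_weight m J * a (prefix_args m J).
Proof.
elim: m => [_|m IH lt_mp]; last by rewrite (IH (ltnW lt_mp)) (expand_slot (Ordinal lt_mp)).
rewrite (eq_bigl (pred1 J1)) ?big_pred1_eq; last first.
  move=> J; apply/forallP/eqP => [agJ|-> k]; last by rewrite eqxx implybT.
  by apply/ffunP => k; exact/eqP/(implyP (agJ k)).
by rewrite /prefix_weight big_pred0 // mul1r.
Qed.
End PrefixExpansion.

Lemma multilinear_expansion :
  a u = \sum_(J : idx) (\prod_k phi (c (J k) k)) * a (fun k => v (J k)).
Proof.
case: (pickP (@predT idx)) => [J1 _ | no_map].
  rewrite (expand_prefix J1 (leqnn p)); apply: eq_big => [J|J _].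
    by apply/forallP => k; rewrite leqNgt ltn_ord.
  rewrite /prefix_weight /prefix_args (eq_bigl _ _ (fun k => ltn_ord k)).
  by congr (_ * a _); apply: functional_extensionality => k; rewrite ltn_ord.
rewrite big_pred0 //.
case: (pickP (@predT 'I_n)) => [j0 _ | no_index]; first by have := no_map [ffun=> j0].
case: (pickP (@predT 'I_p)) => [k0 _ | no_slot]; last first.
  by have := no_map [ffun k => False_rect 'I_n (Bool.diff_true_false (no_slot k))].
have u0 : u k0 = 0 by rewrite u_coords big_pred0.
by rewrite -(upd_id u k0) u0 form_upd0.
Qed.

(* Grouping the expansion by the increasing rearrangement of the index maps:
   non-injective maps contribute nothing and each orbit contributes a
   signed sum over the permutations. *)
Lemma antisymmetrization :
  \sum_(J : idx | incr J) \sum_(s : 'S_p)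
     (-1) ^+ s * (\prod_k phi (c (J k) (s k))) * a (fun k => v (J k)) = a u.
Proof.
pose term (J : idx) := (\prod_k phi (c (J k) k)) * a (fun k => v (J k)).
have term_precomp (J : idx) (s : 'S_p) : term (precomp J s^-1) =
    (-1) ^+ s * (\prod_k phi (c (J k) (s k))) * a (fun k => v (J k)).
  rewrite /term; have -> : (fun k => v (precomp J s^-1 k))
                           = (fun k => (fun l => v (J l)) ((s^-1)%g k)).
    by apply: functional_extensionality => k; rewrite ffunE.
  rewrite (form_perm (fun l => v (J l)) (s^-1)%g) odd_permV mulrCA mulrA.
  congr (_ * _ * _); rewrite (reindex_inj (@perm_inj _ s)).
  by apply: eq_bigr => k _; rewrite ffunE permK.
rewrite multilinear_expansion.
transitivity (\sum_(J : idx | incr J) \sum_(s : 'S_p) term (precomp J s)).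
  apply: eq_bigr => J _; rewrite [RHS](reindex_inj invg_inj).
  by apply: eq_bigr => s _; rewrite term_precomp.
rewrite (eq_bigr (fun J => \sum_(J' : idx | injectiveb J' && (rearrange J' == J)) term J'));
  last by move=> J incrJ; exact: sum_orbit.
rewrite -(partition_big (@rearrange _ _) (@incr n p)); last by move=> J; exact: rearrange_incr.
rewrite big_mkcond /=; apply: eq_bigr => J _; case: ifP => // /negbT /injectivePn [i [j ij Jij]].
by rewrite /term (a_alt (u := fun k => v (J k)) ij) ?mulr0 //= Jij.
Qed.
End Expansion.
End AlternatingForms.

Theorem proposition5p3 (F : numClosedFieldType) (n : nat) (gT : finGroupType)
  (rG : mx_representation F [set: gT] n)
  (B : gT -> 'M[F]_n) (e : gT -> 'I_n -> F)
  (HB : forall g, B g \in unitmx)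
  (He : forall g (i : 'I_n), rG g *m col i (B g) = e g i *: col i (B g))
  (p : nat) (alpha : ('I_p -> 'cV[F]_n) -> gT -> MP F n)
  (Hml : multilinear alpha) (Halt : alternating alpha) :
  forall (u : 'I_p -> 'cV[F]_n) (g : gT),
    PhiStar (Upsilon B e alpha) u g = alpha u g.
Proof.
move=> u g.
pose c j k := coordB (B g) (u k) j.
have u_coords k : u k = \sum_j c j k *: col j (B g).
  by rewrite -mulmx_colsum mulKVmx.
rewrite -(antisymmetrization (phi := @cst F n) (a := fun w => alpha w g)
            (fun k w x y c => Hml k w x y c g) (fun w i j ij wij => Halt w i j ij wij g)
            u_coords).
rewrite [RHS]exchange_big /PhiStar; apply: eq_bigr => s _.
by rewrite Upsilon_embV // mulr_sumr; apply: eq_bigr => J _; rewrite mulrA.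
Qed.
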